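(* Let $\alpha_1,\dots,\alpha_m,\beta_1,\dots,\beta_n$ be indeterminates, let $a_0=1$, $a_k=\sum_{1\le i_1<\dots<i_k\le m}\alpha_{i_1}\cdots\alpha_{i_k}$ ($1\le k\le m$), $b_0=1$, $b_k=\sum_{1\le j_1<\dots<j_k\le n}\beta_{j_1}\cdots\beta_{j_k}$ ($1\le k\le n$), and let $\mathbf{S}=\operatorname{per}(M)\in\mathbb{Z}[\alpha,\beta]$ where $M$ is the $(m+n)\times(m+n)$ matrix whose row $j$ ($1\le j\le n$) has $a_k$ in column $j+k$ ($0\le k\le m$) and $0$ elsewhere, and whose row $n+i$ ($1\le i\le m$) has $b_k$ in column $i+k$ ($0\le k\le n$) and $0$ elsewhere. Then a monomial $\alpha^\mu\beta^\nu$ has nonzero coefficient in $\mathbf{S}$ if and only if it has a syl-representation. (Indeed $\mathbf{S}=\sum_{\mathcal{S}_1,\mathcal{S}_2\in\{0,1\}^{m\times n},\ PC(\mathcal{S}_1,\mathcal{S}_2)}\alpha^{rs(\mathcal{S}_1)}\beta^{cs(\mathcal{S}_2)}$.)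
   Context: For $M\in\{0,1\}^{m\times n}$: $rs(M)=(\sum_j M_{ij})_{i=1..m}$, $cs(M)=(\sum_i M_{ij})_{j=1..n}$, adjusted row sum $ars(M)=(i+\sum_j M_{ij})_{i=1..m}$, adjusted column sum $acs(M)=(j+\sum_i M_{ij})_{j=1..n}$. For $\mathcal{S}_1,\mathcal{S}_2\in\{0,1\}^{m\times n}$, they are properly coupled, written $PC(\mathcal{S}_1,\mathcal{S}_2)$, iff $\{c'_1,\dots,c'_n,r'_1,\dots,r'_m\}=\{1,\dots,m+n\}$ where $c'=acs(\mathcal{S}_1)$ and $r'=ars(\mathcal{S}_2)$. A syl-representation of the term $\alpha^\mu\beta^\nu$ is a pair $(\mathcal{S}_1,\mathcal{S}_2)$ of matrices in $\{0,1\}^{m\times n}$ with $rs(\mathcal{S}_1)=\mu$, $cs(\mathcal{S}_2)=\nu$ and $PC(\mathcal{S}_1,\mathcal{S}_2)$. *)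

From HB Require Import structures.
From mathcomp Require Import all_boot all_order all_algebra all_fingroup.
Set Implicit Arguments. Unset Strict Implicit. Unset Printing Implicit Defensive.
Import GRing.Theory.
Local Open Scope ring_scope.

(* Z[x_0, ..., x_{k-1}] as iterated univariate polynomials:
   mpoly k.+1 = (mpoly k)[x_k]. *)
Fixpoint mpoly (k : nat) : comNzRingType :=
  match k with
  | 0 => int
  | k'.+1 => {poly mpoly k'}
  end.

Fixpoint mvar (k : nat) : 'I_k -> mpoly k :=
  match k return 'I_k -> mpoly k with
  | 0 => fun _ => 0
  | k'.+1 => fun i =>
      match unlift ord_max i with
      | Some j => (mvar j)%:P
      | None => 'X
      end
  end.

Fixpoint mcoef (k : nat) : mpoly k -> ('I_k -> nat) -> int :=
  match k return mpoly k -> ('I_k -> nat) -> int with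
  | 0 => fun p _ => p
  | k'.+1 => fun p e =>
      @mcoef k' (p`_(e ord_max)) (fun i => e (widen_ord (leqnSn k') i))
  end.

Definition per (R : comNzRingType) (N : nat) (A : 'M[R]_N) : R :=
  \sum_(s : 'S_N) \prod_(i < N) A i (s i).

Definition alpha (m n : nat) (i : 'I_m) : mpoly (m + n) := mvar (lshift n i).
Definition beta (m n : nat) (j : 'I_n) : mpoly (m + n) := mvar (rshift m j).

Definition a_el (m n k : nat) : mpoly (m + n) :=
  \sum_(A : {set 'I_m} | #|A| == k) \prod_(i in A) alpha n i.
Definition b_el (m n k : nat) : mpoly (m + n) :=
  \sum_(B : {set 'I_n} | #|B| == k) \prod_(j in B) beta m j.

(* The (m+n)x(m+n) Sylvester-type matrix (0-indexed rows/columns):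
   row j < n has a_k in column j+k (0<=k<=m);
   row n+i (i < m) has b_k in column i+k (0<=k<=n). *)
Definition sylM (m n : nat) : 'M[mpoly (m + n)]_(n + m) :=
  \matrix_(r < n + m, c < n + m)
    if (r < n)%N then
      (if (r <= c <= r + m)%N then a_el m n (c - r) else 0)
    else
      (if (r - n <= c <= r - n + n)%N then b_el m n (c - (r - n)) else 0).

Definition sylS (m n : nat) : mpoly (m + n) :=
  per (castmx (addnC n m, addnC n m) (sylM m n)).

Definition expvec (m n : nat) (mu : 'I_m -> nat) (nu : 'I_n -> nat)
  : 'I_(m + n) -> nat :=
  fun k => match split k with inl i => mu i | inr j => nu j end.

(* Row/column sums and adjusted sums (1-based indices) of 0/1 matrices. *)
Definition rs (m n : nat) (M : 'M[bool]_(m, n)) (i : 'I_m) : nat :=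
  (\sum_(j < n) M i j)%N.
Definition cs (m n : nat) (M : 'M[bool]_(m, n)) (j : 'I_n) : nat :=
  (\sum_(i < m) M i j)%N.
Definition ars (m n : nat) (M : 'M[bool]_(m, n)) (i : 'I_m) : nat :=
  (i.+1 + rs M i)%N.
Definition acs (m n : nat) (M : 'M[bool]_(m, n)) (j : 'I_n) : nat :=
  (j.+1 + cs M j)%N.

Definition PC (m n : nat) (S1 S2 : 'M[bool]_(m, n)) : Prop :=
  [seq acs S1 j | j : 'I_n] ++ [seq ars S2 i | i : 'I_m] =i iota 1 (m + n).

Definition syl_rep (m n : nat) (mu : 'I_m -> nat) (nu : 'I_n -> nat)
  (S1 S2 : 'M[bool]_(m, n)) : Prop :=
  (forall i, rs S1 i = mu i) /\ (forall j, cs S2 j = nu j) /\ PC S1 S2.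

(* Expanding the permanent, the a-row j contributes a subset X_j of the alphas with
   |X_j| = s(j) - j, which we record as column j of a 0/1 matrix S1; dually the b-row i
   contributes row i of S2.  Thus S is a sum, with coefficients 1, of the monomials
   alpha^(rs S1) beta^(cs S2) over the triples (s, S1, S2) in which the permutation s
   sends column j to j + cs_j(S1) and row i to i + rs_i(S2).  Such an s exists exactly
   when the adjusted sums of S1 and S2 enumerate {1, ..., m + n}, i.e. when
   PC(S1, S2); as no coefficient is negative, nothing cancels. *)

From mathcomp Require Import all_boot all_order all_algebra all_fingroup.
From mathcomp Require Import zify.
Set Implicit Arguments. Unset Strict Implicit. Unset Printing Implicit Defensive.
Import GRing.Theory Num.Theory.
Local Open Scope ring_scope.

Lemma mcoef0 k e : @mcoef k 0 e = 0.
Proof. by elim: k e => [|k IH] e //=; rewrite coef0 IH. Qed.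

Lemma mcoefD k (p q : mpoly k) e : mcoef (p + q) e = mcoef p e + mcoef q e.
Proof. by elim: k p q e => [|k IH] p q e //=; rewrite coefD IH. Qed.

Lemma mcoef_sum k (I : finType) (P : pred I) (F : I -> mpoly k) e :
  mcoef (\sum_(i | P i) F i) e = \sum_(i | P i) mcoef (F i) e.
Proof. by apply: (big_morph (fun p : mpoly k => mcoef p e)) => [p q|]; rewrite ?mcoefD ?mcoef0. Qed.

Definition mmon k (f : 'I_k -> nat) : mpoly k := \prod_(i < k) mvar i ^+ f i.

Lemma mvar_widen k (i : 'I_k) : mvar (widen_ord (leqnSn k) i) = (mvar i)%:P.
Proof.
rewrite /=; case: unliftP => [j /(congr1 val) /= | /(congr1 val) /= ik].
  by rewrite /bump leqNgt ltn_ord => ij; congr (mvar _)%:P; apply: val_inj.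
by have := ltn_ord i; rewrite ik ltnn.
Qed.

Lemma mmon_recr k (f : 'I_k.+1 -> nat) :
  mmon f = (mmon (fun i => f (widen_ord (leqnSn k) i)))%:P * 'X^(f ord_max).
Proof.
rewrite /mmon big_ord_recr rmorph_prod; congr (_ * _); last by rewrite /= unlift_none.
by apply: eq_bigr => i _; rewrite mvar_widen rmorphXn.
Qed.

Lemma forall_ord_recr n (P : pred 'I_n.+1) :
  [forall i, P i] = [forall i : 'I_n, P (widen_ord (leqnSn n) i)] && P ord_max.
Proof.
have andE m (Q : pred 'I_m) : [forall i, Q i] = \big[andb/true]_i Q i.
  by rewrite big_andE; apply: eq_forallb.
by rewrite !andE big_ord_recr.
Qed.

Lemma mcoef_mmon k (f e : 'I_k -> nat) : mcoef (mmon f) e = [forall i, f i == e i]%:R.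
Proof.
elim: k f e => [|k IH] f e.
  by rewrite /mmon big_ord0 (_ : [forall i, _] = true) //; apply/forallP => -[].
rewrite mmon_recr forall_ord_recr /= coefMXn coefC.
case: ltnP => [lt_e_f | le_f_e]; first by rewrite mcoef0 gtn_eqF ?andbF.
rewrite subn_eq0; case: leqP => [le_e_f | lt_f_e]; last by rewrite mcoef0 ltn_eqF ?andbF.
by rewrite IH (_ : f _ == _) ?andbT //; apply/eqP; lia.
Qed.

Lemma mcoef_sum_mmon k (I : finType) (P : pred I) (F : I -> 'I_k -> nat) e :
  mcoef (\sum_(t | P t) mmon (F t)) e = #|[set t | P t & [forall i, F t i == e i]]|%:R.
Proof.
rewrite mcoef_sum (eq_bigr _ (fun t _ => mcoef_mmon (F t) e)) -natr_sum -sum1dep_card.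
by rewrite big_mkcondr; congr _%:R; apply: eq_bigr => t _; case: [forall i, _].
Qed.

Lemma mcoef_sum_mmon_neq0 k (I : finType) (P : pred I) (F : I -> 'I_k -> nat) e :
  mcoef (\sum_(t | P t) mmon (F t)) e != 0 <-> exists t, P t /\ F t =1 e.
Proof.
rewrite mcoef_sum_mmon pnatr_eq0 cards_eq0; split.
  by case/set0Pn => t; rewrite inE => /andP [Pt /forallP /(_ _) /eqP]; exists t.
by case=> t [Pt Ft]; apply/set0Pn; exists t; rewrite inE Pt; apply/forallP => i; rewrite Ft.
Qed.

Lemma prodr_if0 (R : comNzRingType) (I : finType) (c : pred I) (F : I -> R) :
  \prod_i (if c i then F i else 0) = if [forall i, c i] then \prod_i F i else 0.
Proof.
case: forallP => [c_all | /forallP]; first by apply: eq_bigr => i _; rewrite c_all.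
by rewrite negb_forall => /existsP [i /negbTE ci]; rewrite (bigD1 i) //= ci mul0r.
Qed.

Lemma rs_card m n (M : 'M[bool]_(m, n)) i : rs M i = #|[set j | M i j]|.
Proof. by rewrite -sum1dep_card [RHS]big_mkcond; apply: eq_bigr => j _; case: (M i j). Qed.

Lemma cs_card m n (M : 'M[bool]_(m, n)) j : cs M j = #|[set i | M i j]|.
Proof. by rewrite -sum1dep_card [RHS]big_mkcond; apply: eq_bigr => i _; case: (M i j). Qed.

Lemma prod_sum_subsets (R : comNzRingType) m n (x : 'I_m -> R) (P : 'I_n -> pred nat) :
  \prod_(j < n) \sum_(X : {set 'I_m} | P j #|X|) \prod_(i in X) x i =
  \sum_(M : 'M[bool]_(m, n) | [forall j, P j (cs M j)]) \prod_(i < m) x i ^+ rs M i.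
Proof.
under eq_bigr do rewrite big_mkcond.
rewrite bigA_distr_bigA /= [RHS]big_mkcond.
rewrite (reindex (fun M : 'M[bool]_(m, n) => [ffun j => [set i | M i j]])) /=; last first.
  exists (fun f : {ffun 'I_n -> {set 'I_m}} => \matrix_(i, j) (i \in f j)) => [M _ | f _].
    by apply/matrixP => i j; rewrite !mxE ffunE inE.
  by apply/ffunP => j; apply/setP => i; rewrite !ffunE inE mxE.
apply: eq_bigr => M _; under eq_bigr do rewrite ffunE.
rewrite prodr_if0; under eq_forallb do rewrite -cs_card.
case: [forall j, _] => //.
under eq_bigr do rewrite big_mkcond.
rewrite exchange_big; apply: eq_bigr => i _.
under eq_bigr do rewrite inE.
by rewrite -big_mkcond prodr_const rs_card cardsE.
Qed.

Lemma rs_tr m n (M : 'M[bool]_(m, n)) j : rs M^T j = cs M j.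
Proof. by apply: eq_bigr => i _; rewrite mxE. Qed.

Lemma cs_tr m n (M : 'M[bool]_(m, n)) i : cs M^T i = rs M i.
Proof. by apply: eq_bigr => j _; rewrite mxE. Qed.

Lemma per_castmx (R : comNzRingType) N N' (eqN : N = N') (A : 'M[R]_N) :
  per (castmx (eqN, eqN) A) = per A.
Proof. by case: N' / eqN; rewrite castmx_id. Qed.

Lemma codom_iota_perm N (G : 'I_N -> nat) :
  codom G =i iota 1 N <-> exists s : 'S_N, forall k, G k = (s k).+1.
Proof.
split=> [codomG | [s Gs] x].
  have G_bound k : (0 < G k <= N)%N.
    by have := codomG (G k); rewrite codom_f mem_iota add1n ltnS => /esym.
  have G_inj : injective G.
    apply/injectiveP; rewrite /injectiveb /dinjectiveb.
    rewrite (uniq_size_uniq (iota_uniq 1 N) (fun x => esym (codomG x))).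
    by rewrite size_map -cardE card_ord size_iota.
  have G_pred_lt k : ((G k).-1 < N)%N by have := G_bound k; lia.
  have h_inj : injective (fun k => Ordinal (G_pred_lt k)).
    move=> k1 k2 /(congr1 val) /= eq_pred; apply: G_inj.
    by have := G_bound k1; have := G_bound k2; lia.
  by exists (perm h_inj) => k; rewrite permE /= prednK //; case/andP: (G_bound k).
rewrite mem_iota add1n ltnS; apply/codomP/andP => [[k ->] | [x_gt0 x_le]].
  by rewrite Gs ltn_ord.
have x_lt : (x.-1 < N)%N by lia.
by exists ((s^-1)%g (Ordinal x_lt)); rewrite Gs permKV /= prednK.
Qed.

Section Coupling.
Variables m n : nat.

Definition coupled (s : 'S_(n + m)) (S1 S2 : 'M[bool]_(m, n)) : bool :=
  [forall j, acs S1 j == (s (lshift m j)).+1] &&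
  [forall i, ars S2 i == (s (rshift n i)).+1].

Definition adjusted_sums (S1 S2 : 'M[bool]_(m, n)) (k : 'I_(n + m)) : nat :=
  match split k with inl j => acs S1 j | inr i => ars S2 i end.

Lemma codom_adjusted_sums (S1 S2 : 'M[bool]_(m, n)) :
  codom (adjusted_sums S1 S2) =i [seq acs S1 j | j : 'I_n] ++ [seq ars S2 i | i : 'I_m].
Proof.
move=> x; rewrite mem_cat; apply/codomP/orP => [[k ->] | [/imageP [j _ ->] | /imageP [i _ ->]]].
- by rewrite /adjusted_sums; case: split => [j|i]; [left|right]; apply: image_f.
- by exists (lshift m j); rewrite /adjusted_sums (unsplitK (inl j)).
- by exists (rshift n i); rewrite /adjusted_sums (unsplitK (inr i)).
Qed.

Lemma PC_coupled (S1 S2 : 'M[bool]_(m, n)) : PC S1 S2 <-> exists s, coupled s S1 S2.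
Proof.
have -> : PC S1 S2 <-> codom (adjusted_sums S1 S2) =i iota 1 (n + m).
  rewrite /PC addnC; split=> eq_iota x; first by rewrite codom_adjusted_sums.
  by rewrite -codom_adjusted_sums.
rewrite codom_iota_perm; split=> [[s Gs] | [s /andP [/forallP acs_s /forallP ars_s]]]; exists s.
  apply/andP; split; apply/forallP.
    by move=> j; have := Gs (lshift m j); rewrite /adjusted_sums (unsplitK (inl j)) => ->.
  by move=> i; have := Gs (rshift n i); rewrite /adjusted_sums (unsplitK (inr i)) => ->.
by move=> k; rewrite -(splitK k) /adjusted_sums unsplitK; case: split => [j|i]; apply/eqP.
Qed.

End Coupling.

Section SylvesterPermanent.
Variables m n : nat.

Lemma sylM_lshift (j : 'I_n) (c : 'I_(n + m)) :
  sylM m n (lshift m j) c = \sum_(X : {set 'I_m} | (j + #|X|)%N == c) \prod_(i in X) alpha n i.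
Proof.
rewrite mxE /= ltn_ord; case: ifP => [/andP [le_j_c le_c_jm] | out_of_band].
  by rewrite /a_el; apply: eq_bigl => X; apply/eqP/eqP => [->|<-]; rewrite ?subnKC ?addKn.
rewrite big_pred0 // => X; apply/negbTE/eqP => eq_c; move: out_of_band.
by rewrite -eq_c leq_addr leq_add2l (leq_trans (max_card X)) ?card_ord.
Qed.

Lemma sylM_rshift (i : 'I_m) (c : 'I_(n + m)) :
  sylM m n (rshift n i) c = \sum_(Y : {set 'I_n} | (i + #|Y|)%N == c) \prod_(j in Y) beta m j.
Proof.
rewrite mxE /= ltnNge leq_addr /= addKn; case: ifP => [/andP [le_i_c le_c_in] | out_of_band].
  by rewrite /b_el; apply: eq_bigl => Y; apply/eqP/eqP => [->|<-]; rewrite ?subnKC ?addKn.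
rewrite big_pred0 // => Y; apply/negbTE/eqP => eq_c; move: out_of_band.
by rewrite -eq_c leq_addr leq_add2l (leq_trans (max_card Y)) ?card_ord.
Qed.

Lemma mmon_expvec (mu : 'I_m -> nat) (nu : 'I_n -> nat) :
  mmon (expvec mu nu) = \prod_i alpha n i ^+ mu i * \prod_j beta m j ^+ nu j.
Proof.
rewrite /mmon big_split_ord /expvec.
by congr (_ * _); apply: eq_bigr => k _; rewrite ?(unsplitK (inl k)) ?(unsplitK (inr k)).
Qed.

Lemma expvec_eq (mu mu' : 'I_m -> nat) (nu nu' : 'I_n -> nat) :
  expvec mu nu =1 expvec mu' nu' <-> mu =1 mu' /\ nu =1 nu'.
Proof.
split=> [eq_exp | [eq_mu eq_nu] k]; last by rewrite /expvec; case: split.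
split=> [i | j]; [have := eq_exp (lshift n i) | have := eq_exp (rshift m j)].
  by rewrite /expvec (unsplitK (inl i)).
by rewrite /expvec (unsplitK (inr j)).
Qed.

Lemma coupledE (s : 'S_(n + m)) (S1 S2 : 'M[bool]_(m, n)) :
  coupled s S1 S2 =
  [forall j : 'I_n, (j + cs S1 j)%N == s (lshift m j)] &&
  [forall i : 'I_m, (i + rs S2 i)%N == s (rshift n i)].
Proof. by congr (_ && _); apply: eq_forallb => k; rewrite /acs /ars addSn eqSS. Qed.

Lemma sylS_expand :
  sylS m n = \sum_(t : 'S_(n + m) * 'M[bool]_(m, n) * 'M[bool]_(m, n)
                   | coupled t.1.1 t.1.2 t.2) mmon (expvec (rs t.1.2) (cs t.2)).
Proof.
rewrite /sylS per_castmx.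
transitivity (\sum_(s : 'S_(n + m)) \sum_(S1 : 'M[bool]_(m, n))
                \sum_(S2 | coupled s S1 S2) mmon (expvec (rs S1) (cs S2))).
  apply: eq_bigr => s _; rewrite big_split_ord /=.
  under eq_bigr do rewrite sylM_lshift.
  under [X in _ * X]eq_bigr do rewrite sylM_rshift.
  rewrite (prod_sum_subsets _ (fun j k => (j + k)%N == s (lshift m j))).
  rewrite (prod_sum_subsets _ (fun i k => (i + k)%N == s (rshift n i))).
  rewrite (reindex (@trmx bool m n)) /=; last by exists (@trmx bool n m) => M _; rewrite trmxK.
  rewrite big_distrlr /= big_mkcond.
  apply: eq_bigr => S1 _; rewrite (eq_bigl _ _ (coupledE s S1)).
  case: [forall j, _]; last by rewrite big_pred0.
  apply: eq_big => [S2 | S2 _]; first by apply: eq_forallb => i; rewrite cs_tr.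
  by rewrite mmon_expvec; under [X in _ * X]eq_bigr do rewrite rs_tr.
by rewrite pair_bigA pair_big_dep.
Qed.

End SylvesterPermanent.

Theorem mainTheorem3 (m n : nat) (mu : 'I_m -> nat) (nu : 'I_n -> nat) :
  mcoef (sylS m n) (expvec mu nu) != 0%R <->
  exists S1 S2 : 'M[bool]_(m, n), syl_rep mu nu S1 S2.
Proof.
rewrite sylS_expand mcoef_sum_mmon_neq0; split.
  move=> [[[s S1] S2] /= [coupled_s /expvec_eq [rs_S1 cs_S2]]].
  by exists S1, S2; split=> //; split=> //; apply/PC_coupled; exists s.
move=> [S1 [S2 [rs_S1 [cs_S2 /PC_coupled [s coupled_s]]]]].
by exists (s, S1, S2); split=> //; apply/expvec_eq.
Qed.
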